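(* Let $g,h\in K\{\{x,y\}$ with $\mathrm{ord}_x(g)\ge1$. Then there is a unique $K$-algebra homomorphism $\varphi=\varphi_{(g,h)}:K\{\{x,y\}\to K\{\{x,y\}$ (i.e. a $K$-linear map with $\varphi(1_P)=1_P$ and $\varphi(f_1\cdot\ldots\cdot f_m)=\varphi(f_1)\cdot\ldots\cdot\varphi(f_m)$ for all $m\ge2$) such that $\varphi(x)=g$, $\varphi(y)=h$, and $\varphi$ is continuous with respect to the $x$-adic topology.
   Context: Let $K$ be a field and let $x\neq y$ be two symbols (variables). A finite planar reduced rooted tree is a finite rooted tree in which the children of each vertex are linearly ordered and no vertex has exactly one child; its leaves are the vertices without children (the one-vertex tree has its root as its unique leaf). $P(x,y)$ denotes the set of isomorphism classes of pairs $S=(T,\lambda)$ with $T$ a finite planar reduced rooted tree and $\lambda:L(T)\to\{x,y\}$ a labeling of its set of leaves $L(T)$; $\deg_x(S)=\#\lambda^{-1}(x)$, $\deg_y(S)=\#\lambda^{-1}(y)$, $\deg(S)=\#L(T)$. Let $P'(x,y)=P(x,y)\cup\{1_P\}$, where $1_P$ represents the empty tree (with $\deg_x(1_P)=\deg_y(1_P)=0$). For $m\ge 2$ and $S_1,\dots,S_m\in P(x,y)$, the $m$-ary grafting $\bullet_m(S_1,\dots,S_m)$ is the labeled tree obtained by adding a new root whose ordered children are the roots of $S_1,\dots,S_m$ (in this order), with the labelings inherited. It is extended to $P'(x,y)$ by deleting occurrences of $1_P$: $\bullet_m(S_1,\dots,S_m)=\bullet_{r}(S_{j_1},\dots,S_{j_r})$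 where $S_{j_1},\dots,S_{j_r}$ are the entries different from $1_P$ (in order), with the conventions $\bullet_1(S)=S$ and $\bullet_0()=1_P$. $K\{\{x,y\}$ is the $K$-vector space of all functions $f:P'(x,y)\to K$, $S\mapsto c_S(f)$, such that for every $n\in\mathbb N$ the set $\{S: c_S(f)\ne0,\ \deg_x(S)=n\}$ is finite; one writes $f=\sum_S c_S(f)S$ and identifies $S\in P'(x,y)$ with its indicator function (so $x$ and $y$ denote the one-vertex trees labeled $x$, resp. $y$). For $m\ge2$, the product $\bullet_m(f_1,\dots,f_m)=f_1\cdot\ldots\cdot f_m$ is defined by $c_S(f_1\cdot\ldots\cdot f_m)=\sum c_{S_1}(f_1)\cdots c_{S_m}(f_m)$, summed over all $(S_1,\dots,S_m)\in P'(x,y)^m$ with $\bullet_m(S_1,\dots,S_m)=S$. For $f\ne0$, $\mathrm{ord}_x(f)=\min\{\deg_x(S): c_S(f)\neq 0\}$, and $\mathrm{ord}_x(0)=\infty$; $|f|_x=(1/2)^{\mathrm{ord}_x(f)}$ (with $|0|_x=0$), and the $x$-adic distance/topology is given by $|f-g|_x$. *)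

From HB Require Import structures.
From mathcomp Require Import all_boot all_algebra.
From Stdlib Require List.
Set Implicit Arguments. Unset Strict Implicit. Unset Printing Implicit Defensive.
Import GRing.Theory.
Local Open Scope ring_scope.

Inductive lab := X | Y.

Definition lab_code (l : lab) : bool := if l is X then true else false.
Definition lab_decode (b : bool) : lab := if b then X else Y.
Lemma lab_codeK : cancel lab_code lab_decode. Proof. by case. Qed.
HB.instance Definition _ := Countable.copy lab (can_type lab_codeK).

(* Finite planar REDUCED rooted trees with leaves labelled by x or y, up to
   isomorphism.  A non-leaf vertex has the ordered list of children
   [:: t1, t2 & ts], i.e. at least two children, so reducedness is built in. *)
Inductive ltree :=
| LLeaf : lab -> ltree
| LNode : ltree -> ltree -> seq ltree -> ltree.

Fixpoint tree_encode (t : ltree) : GenTree.tree lab :=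
  match t with
  | LLeaf l => GenTree.Leaf l
  | LNode a b ts => GenTree.Node 0 (tree_encode a :: tree_encode b :: map tree_encode ts)
  end.

Fixpoint tree_decode (g : GenTree.tree lab) : ltree :=
  match g with
  | GenTree.Leaf l => LLeaf l
  | GenTree.Node _ (a :: b :: ts) => LNode (tree_decode a) (tree_decode b) (map tree_decode ts)
  | GenTree.Node _ _ => LLeaf X
  end.

Lemma tree_codeK : cancel tree_encode tree_decode.
Proof.
rewrite /cancel; fix IH 1; case=> [l|a b ts] //=; rewrite !IH; congr LNode.
elim: ts => //= t ts IHts; by rewrite IH IHts.
Qed.

HB.instance Definition _ := Countable.copy ltree (can_type tree_codeK).

(* P'(x,y) : None is the empty ltree 1_P. *)
Definition ptree := option ltree.

Fixpoint degx_tree (t : ltree) : nat :=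
  match t with
  | LLeaf X => 1
  | LLeaf Y => 0
  | LNode a b ts => degx_tree a + degx_tree b + sumn (map degx_tree ts)
  end.

Definition degx (S : ptree) : nat := if S is Some t then degx_tree t else 0.

Definition graft (ss : seq ptree) : ptree :=
  match pmap id ss with
  | [::] => None
  | [:: t] => Some t
  | a :: b :: ts => Some (LNode a b ts)
  end.

Fixpoint tuples_in (A : Type) (c : seq A) (m : nat) : seq (seq A) :=
  if m is m'.+1 then [seq a :: s | a <- c, s <- tuples_in c m'] else [:: [::]].

(* Every entry S_i of a tuple with graft = S is 1_P, S itself, or a child of
   the root of S; so these candidates suffice. *)
Definition candidates (S : ptree) : seq ptree :=
  match S with
  | None => [:: None]
  | Some (LLeaf l) => [:: None; Some (LLeaf l)]
  | Some (LNode a b ts) => None :: Some (LNode a b ts) :: map Some (a :: b :: ts)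
  end.

Definition decomps (m : nat) (S : ptree) : seq (seq ptree) :=
  undup [seq ss <- tuples_in (candidates S) m | graft ss == S].

Section Series.
Variable K : fieldType.

(* An element f of K{{x,y}} is a coefficient function P'(x,y) -> K with the
   finiteness condition. *)
Definition series (f : ptree -> K) : Prop :=
  forall n : nat, exists s : seq ptree,
    forall S, f S != 0 -> degx S = n -> S \in s.

Definition ind (S0 : ptree) : ptree -> K := fun S => (S == S0)%:R.
Definition one_s : ptree -> K := ind None.
Definition x_s : ptree -> K := ind (Some (LLeaf X)).
Definition y_s : ptree -> K := ind (Some (LLeaf Y)).

Definition mprod (fs : seq (ptree -> K)) : ptree -> K :=
  fun S => \sum_(ss <- decomps (size fs) S) \prod_(p <- zip fs ss) p.1 p.2.

Definition lincomb (a : K) (f g : ptree -> K) : ptree -> K :=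
  fun S => a * f S + g S.
Definition sub_s (f g : ptree -> K) : ptree -> K := fun S => f S - g S.

(* ord_x f >= n  (with ord_x 0 = oo), i.e. |f|_x <= (1/2)^n *)
Definition ordx_ge (f : ptree -> K) (n : nat) : Prop :=
  forall S, f S != 0 -> (n <= degx S)%N.

(* continuity of phi on K{{x,y}} for the x-adic topology, written with the
   basic x-adic balls {f : ord_x f >= n} *)
Definition xadic_continuous (phi : (ptree -> K) -> (ptree -> K)) : Prop :=
  forall f, series f -> forall n : nat, exists m : nat,
    forall g, series g -> ordx_ge (sub_s g f) m -> ordx_ge (sub_s (phi g) (phi f)) n.

Definition is_hom_gh (phi : (ptree -> K) -> (ptree -> K)) (g h : ptree -> K) : Prop :=
  (forall f, series f -> series (phi f)) /\
      (forall a f1 f2, series f1 -> series f2 ->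
         phi (lincomb a f1 f2) = lincomb a (phi f1) (phi f2)) /\
      phi one_s = one_s /\
      (forall fs : seq (ptree -> K), (2 <= size fs)%N ->
         (forall f, List.In f fs -> series f) ->
         phi (mprod fs) = mprod (map phi fs)) /\
      phi x_s = g /\ phi y_s = h /\
      xadic_continuous phi.

End Series.

(* A labelled tree S is the grafted product of its leaves, so a homomorphism with
   x |-> g, y |-> h must send S to subst S, the tree with its x-leaves replaced by g,
   its y-leaves by h and its nodes by the corresponding m-ary products.  Since
   ord_x g >= 1 we get ord_x (subst S) >= deg_x S, hence the coefficient of
   phi f := sum_S c_S(f) subst S at T only involves the finitely many S in the support
   of f with deg_x S <= deg_x T.  This makes phi well defined and x-adically
   continuous; linearity is immediate and multiplicativity follows by expanding both
   sides as sums over tuples of trees.  Conversely, a continuous homomorphism agrees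
   with phi on every finite truncation of f by linearity, and these truncations
   converge to f. *)

From mathcomp Require Import all_boot all_algebra.
From Stdlib Require Import ClassicalEpsilon FunctionalExtensionality.
Set Implicit Arguments. Unset Strict Implicit. Unset Printing Implicit Defensive.
Import GRing.Theory.
Local Open Scope ring_scope.

Lemma mem_tuples_in (A : eqType) (c : seq A) m s :
  (s \in tuples_in c m) = (size s == m) && all (fun a => a \in c) s.
Proof.
elim: m s => [|m IH] s /=; first by case: s.
apply/allpairsPdep/idP => [[a [s' [ha hs' ->]]]|].
  by rewrite IH in hs'; rewrite /= eqSS ha.
case: s => [|a s] //=; rewrite eqSS => /and3P [hs ha hall].
by exists a, s; rewrite IH hs.
Qed.

Lemma tuples_in_uniq (A : eqType) (c : seq A) m : uniq c -> uniq (tuples_in c m).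
Proof.
move=> uc; elim: m => [|m IH] //=.
by apply: allpairs_uniq => // [[a s]] [b t] _ _ /= [-> ->].
Qed.

Lemma ltree_ind_in (Q : ltree -> Prop) : (forall l, Q (LLeaf l)) ->
  (forall a b ts, Q a -> Q b -> (forall t, List.In t ts -> Q t) -> Q (LNode a b ts)) ->
  forall t, Q t.
Proof.
move=> HL HN; fix IH 1; case=> [l|a b ts]; first exact: HL.
apply: HN; try exact: IH.
apply/List.Forall_forall; elim: ts => [|t ts IHts]; constructor; [exact: IH | exact: IHts].
Qed.

Lemma degx_graft ss : degx (graft ss) = sumn (map degx ss).
Proof.
have -> : sumn (map degx ss) = sumn (map degx_tree (pmap id ss)).
  by elim: ss => [|[t|] ss IH] //=; rewrite IH.
by rewrite /graft; case: (pmap id ss) => [|a [|b ts]] //=; rewrite ?addn0 ?addnA.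
Qed.

Lemma leq_degx_graft ss S : S \in ss -> (degx S <= degx (graft ss))%N.
Proof.
rewrite degx_graft; elim: ss => //= S' ss IH; rewrite inE => /orP [/eqP ->|/IH].
  exact: leq_addr.
by move/leq_trans; apply; apply: leq_addl.
Qed.

Lemma graft1 S : graft [:: S] = S.
Proof. by case: S. Qed.

Lemma graft_node a b ts : graft (map Some [:: a, b & ts]) = Some (LNode a b ts).
Proof. by rewrite /graft (@map_pK _ _ id Some (fun=> erefl)). Qed.

Definition insert_none k (ss : seq ptree) := take k ss ++ None :: drop k ss.

Lemma graft_insert_none k ss : graft (insert_none k ss) = graft ss.
Proof. by rewrite /graft /insert_none pmap_cat /= -pmap_cat cat_take_drop. Qed.

Lemma insert_noneK k ss : (k <= size ss)%N ->
  take k (insert_none k ss) ++ drop k.+1 (insert_none k ss) = ss.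
Proof.
move=> hk; have hsz : size (take k ss) = k by rewrite size_takel.
rewrite /insert_none take_size_cat // drop_cat hsz ltnNge leqnSn /= subSnn /=.
by rewrite drop0 cat_take_drop.
Qed.

Lemma mem_candidates ss S : graft ss = S -> {subset ss <= candidates S}.
Proof.
move=> <- [t|] hx; last by case: (graft ss) => [[l|a b ts]|].
have : t \in pmap id ss by rewrite mem_pmap; apply/mapP; exists (Some t).
rewrite /graft; case: (pmap id ss) => [|a [|b ts]] //=.
  by rewrite mem_seq1 => /eqP ->; case: a => [l|a b ts]; rewrite !inE eqxx ?orbT.
move=> ht; rewrite -[_ :: _ :: _]/([:: None; Some (LNode a b ts)] ++ map Some [:: a, b & ts]).
by rewrite mem_cat map_f ?orbT.
Qed.

Lemma mem_decomps m S ss : (ss \in decomps m S) = (size ss == m) && (graft ss == S).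
Proof.
rewrite /decomps mem_undup mem_filter mem_tuples_in.
case E : (graft ss == S); rewrite ?andbF //= andbT.
by case: (size ss == m) => //=; apply/allP; apply: mem_candidates; apply/eqP.
Qed.

Lemma decomps_uniq m S : uniq (decomps m S).
Proof. exact: undup_uniq. Qed.

Lemma eq_big_supp_uniq (R : nmodType) (I : eqType) (F : I -> R) (r s : seq I) :
  uniq r -> uniq s -> (forall i, F i != 0 -> i \in r) -> (forall i, F i != 0 -> i \in s) ->
  \sum_(i <- r) F i = \sum_(i <- s) F i.
Proof.
move=> ur us hr hs; apply: perm_big_supp; apply: uniq_perm; rewrite ?filter_uniq // => i.
by rewrite !mem_filter; case: (F i != 0) / idP => //= /[dup] /hr -> /hs ->.
Qed.

Lemma sumr_neq0_exists (R : nmodType) (I : eqType) (F : I -> R) (r : seq I) :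
  \sum_(i <- r) F i != 0 -> exists2 i, i \in r & F i != 0.
Proof.
move=> H; apply/hasP; apply: contraR H => /hasPn H.
by rewrite big1_seq // => i /H; rewrite negbK => /eqP.
Qed.

Section Products.
Variable K : fieldType.
Implicit Types (f : ptree -> K) (fs : seq (ptree -> K)).

Definition zprod fs (ss : seq ptree) : K := \prod_(p <- zip fs ss) p.1 p.2.

Lemma zprod_cons f fs S ss : zprod (f :: fs) (S :: ss) = f S * zprod fs ss.
Proof. by rewrite /zprod /= big_cons. Qed.

Lemma zprod_cat fs1 fs2 ss1 ss2 : size fs1 = size ss1 ->
  zprod (fs1 ++ fs2) (ss1 ++ ss2) = zprod fs1 ss1 * zprod fs2 ss2.
Proof. by move=> h; rewrite /zprod zip_cat // big_cat. Qed.

Lemma zprod_split fs1 f fs2 ss : (size fs1 < size ss)%N ->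
  zprod (fs1 ++ f :: fs2) ss =
  zprod fs1 (take (size fs1) ss) * (f (nth None ss (size fs1)) * zprod fs2 (drop (size fs1).+1 ss)).
Proof.
move=> hk; rewrite -[in LHS](cat_take_drop (size fs1) ss) (drop_nth None hk).
by rewrite zprod_cat ?size_takel ?(ltnW hk) // zprod_cons.
Qed.

Lemma mprodE fs T (U : seq (seq ptree)) : uniq U ->
  (forall ss, size ss = size fs -> graft ss = T -> zprod fs ss != 0 -> ss \in U) ->
  mprod fs T = \sum_(ss <- U) (if (size ss == size fs) && (graft ss == T) then zprod fs ss else 0).
Proof.
move=> uU hU; rewrite /mprod.
transitivity (\sum_(ss <- decomps (size fs) T)
   (if (size ss == size fs) && (graft ss == T) then zprod fs ss else 0)).
  by apply: eq_big_seq => ss; rewrite mem_decomps => ->.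
apply: eq_big_supp_uniq => //; first exact: decomps_uniq.
  by move=> ss; case: andP => [[h1 h2] _|]; rewrite ?mem_decomps ?h1 ?h2 ?eqxx.
by move=> ss; case: andP => [[/eqP h1 /eqP h2]|]; [exact: hU | rewrite eqxx].
Qed.

Lemma mprod_neq0 fs T : mprod fs T != 0 ->
  exists2 ss, size ss = size fs /\ graft ss = T & zprod fs ss != 0.
Proof.
by case/sumr_neq0_exists => ss; rewrite mem_decomps => /andP [/eqP h1 /eqP h2] h3; exists ss.
Qed.

Lemma mprod_nil T : mprod [::] T = one_s K T.
Proof.
rewrite (@mprodE _ _ [:: [::]]) //; last by case.
by rewrite big_seq1 /one_s /ind /= eq_sym; case: eqP => //= _; apply: big_nil.
Qed.

Lemma mprod1 f T : mprod [:: f] T = f T.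
Proof.
rewrite (@mprodE _ _ [:: [:: T]]) //; last first.
  by case=> [|S [|]] //= _; rewrite graft1 => ->; rewrite inE.
by rewrite big_seq1 graft1 eqxx /= zprod_cons [zprod _ _]big_nil mulr1.
Qed.

Lemma zprod_insert_none fs1 fs2 ss : (size fs1 <= size ss)%N ->
  zprod (fs1 ++ one_s K :: fs2) (insert_none (size fs1) ss) = zprod (fs1 ++ fs2) ss.
Proof.
move=> hk; have hsz : size fs1 = size (take (size fs1) ss) by rewrite size_takel.
rewrite zprod_cat // zprod_cons /one_s /ind eqxx mul1r -zprod_cat //.
by rewrite cat_take_drop.
Qed.

Lemma mprod_one_s fs1 fs2 T : mprod (fs1 ++ one_s K :: fs2) T = mprod (fs1 ++ fs2) T.
Proof.
set k := size fs1; set m := size (fs1 ++ fs2).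
have km : (k <= m)%N by rewrite /m size_cat leq_addr.
pose U := map (insert_none k) (decomps m T).
have uU : uniq U.
  rewrite map_inj_in_uniq ?decomps_uniq // => s1 s2.
  rewrite !mem_decomps => /andP [/eqP h1 _] /andP [/eqP h2 _] E.
  by rewrite -(@insert_noneK k s1) ?h1 // E insert_noneK ?h2.
have hU ss : size ss = size (fs1 ++ one_s K :: fs2) -> graft ss = T ->
    zprod (fs1 ++ one_s K :: fs2) ss != 0 -> ss \in U.
  rewrite size_cat /= addnS -size_cat -/m => hs hg.
  have hk : (k < size ss)%N by rewrite hs ltnS.
  (* a nonzero summand has 1_P in the k-th slot, so it comes from a tuple of size m *)
  rewrite zprod_split // !mulf_eq0 !negb_or => /and3P [_ hnone _].
  have {}hnone : nth None ss k = None.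
    by case: (nth None ss k) hnone => // t; rewrite /one_s /ind /= mulr0n eqxx.
  have Ess : ss = insert_none k (take k ss ++ drop k.+1 ss).
    rewrite /insert_none take_size_cat ?drop_size_cat ?size_takel ?(ltnW hk) //.
    by rewrite -hnone -drop_nth // cat_take_drop.
  rewrite Ess map_f // mem_decomps -(graft_insert_none k) -Ess hg eqxx andbT.
  rewrite size_cat size_takel ?(ltnW hk) // size_drop hs subSS.
  exact/eqP/subnKC.
rewrite (mprodE uU hU) big_map /mprod; apply: eq_big_seq => ss.
rewrite mem_decomps => /andP [/eqP hs /eqP hg].
rewrite graft_insert_none hg zprod_insert_none ?hs // /insert_none size_cat /= size_takel ?hs //.
by rewrite size_drop hs addnS subnKC // /m !size_cat /= addnS !eqxx.
Qed.

Definition covers n (A : seq ptree) f := forall S, f S != 0 -> (degx S <= n)%N -> S \in A.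

Lemma series_covers f n : series f -> exists2 A, uniq A & covers n A f.
Proof.
move=> sf; elim: n => [|n [A uA hA]].
  case: (sf 0%N) => A hA; exists (undup A) => [|S hS]; first exact: undup_uniq.
  by rewrite leqn0 mem_undup => /eqP; apply: hA.
case: (sf n.+1) => B hB; exists (undup (A ++ B)) => [|S hS]; first exact: undup_uniq.
rewrite leq_eqVlt ltnS mem_undup mem_cat => /orP [/eqP hd|hd]; first by rewrite hB ?orbT.
by rewrite hA.
Qed.

Lemma series_covers_all fs n : (forall f, List.In f fs -> series f) ->
  exists2 A, uniq A & forall f, List.In f fs -> covers n A f.
Proof.
elim: fs => [|f fs IH] sfs; first by exists [::] => // f [].
case: (series_covers n (sfs f (or_introl erefl))) => A _ hA.
case: IH => [f' hf'|B _ hB]; first by apply: sfs; right.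
exists (undup (A ++ B)) => [|f' [<-|hf'] S hS hd]; first exact: undup_uniq.
  by rewrite mem_undup mem_cat hA.
by rewrite mem_undup mem_cat (hB f') ?orbT.
Qed.

Lemma zprod_neq0_tuples_in fs ss n A : size ss = size fs -> zprod fs ss != 0 ->
  (forall f, List.In f fs -> covers n A f) -> (degx (graft ss) <= n)%N ->
  ss \in tuples_in A (size fs).
Proof.
move=> hs; rewrite degx_graft mem_tuples_in hs eqxx /=.
elim: fs ss hs => [|f fs IH] [|S ss] //= [hs]; rewrite zprod_cons mulf_eq0 negb_or.
case/andP => hf hz hA hd; apply/andP; split.
  by apply: (hA f) => //; [left | exact: leq_trans (leq_addr _ _) hd].
apply: IH => // [f' hf'|]; first by apply: hA; right.
exact: leq_trans (leq_addl _ _) hd.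
Qed.

Lemma mprod_series fs : (forall f, List.In f fs -> series f) -> series (mprod fs).
Proof.
move=> sfs n; case: (series_covers_all n sfs) => A _ hA.
exists (map graft (tuples_in A (size fs))) => T hT hd.
case: (mprod_neq0 hT) => ss [hs hg] hz; apply/mapP; exists ss => //.
by apply: (zprod_neq0_tuples_in hs hz hA); rewrite hg hd.
Qed.

Lemma ind_series S0 : series (ind K S0).
Proof.
move=> n; exists [:: S0] => S; case: (eqVneq S S0) => [->|ne]; first by rewrite inE.
by rewrite /ind (negbTE ne) mulr0n eqxx.
Qed.

Lemma ind_series_all s0 f : List.In f (map (ind K) s0) -> series f.
Proof. by elim: s0 => //= S s0 IH [<-|/IH]; first exact: ind_series. Qed.

Lemma lincomb_neq0 a f1 f2 S : lincomb a f1 f2 S != 0 -> (f1 S != 0) || (f2 S != 0).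
Proof.
by apply: contraR; rewrite negb_or !negbK /lincomb => /andP [/eqP -> /eqP ->]; rewrite mulr0 addr0.
Qed.

Lemma lincomb_series a f1 f2 : series f1 -> series f2 -> series (lincomb a f1 f2).
Proof.
move=> s1 s2 n; case: (s1 n) => A1 h1; case: (s2 n) => A2 h2.
exists (A1 ++ A2) => S /lincomb_neq0 /orP [H|H] hd; rewrite mem_cat; first by rewrite h1.
by rewrite h2 ?orbT.
Qed.

Lemma zprod_ind s0 ss : size ss = size s0 ->
  zprod (map (ind K) s0) ss = (ss == s0)%:R.
Proof.
elim: s0 ss => [|S0 s0 IH] [|S ss] //=; first by rewrite /zprod big_nil.
by case=> hs; rewrite zprod_cons IH // /ind eqseq_cons -natrM mulnb.
Qed.

Lemma mprod_ind s0 T : mprod (map (ind K) s0) T = ind K (graft s0) T.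
Proof.
rewrite (mprodE (U := [:: s0])) //; last first.
  move=> ss; rewrite size_map => hs _; rewrite zprod_ind //.
  by case: (eqVneq ss s0) => [->|_]; rewrite ?inE // mulr0n eqxx.
by rewrite big_seq1 size_map eqxx zprod_ind ?size_map // eqxx /ind eq_sym; case: eqP.
Qed.

End Products.

Section Substitution.
Variables (K : fieldType) (g h : ptree -> K).
Implicit Types (f : ptree -> K) (fs : seq (ptree -> K)).

Fixpoint subst_tree (t : ltree) : ptree -> K :=
  match t with
  | LLeaf X => g
  | LLeaf Y => h
  | LNode a b ts => mprod (subst_tree a :: subst_tree b :: map subst_tree ts)
  end.

Definition subst (S : ptree) : ptree -> K := if S is Some t then subst_tree t else one_s K.

Lemma mprod_subst_pmap fs ss T :
  mprod (fs ++ map subst ss) T = mprod (fs ++ map subst (map Some (pmap id ss))) T.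
Proof.
elim: ss fs => [|[t|] ss IH] fs //=; first by rewrite -!cat_rcons IH.
by rewrite mprod_one_s IH.
Qed.

Lemma mprod_subst ss T : mprod (map subst ss) T = subst (graft ss) T.
Proof.
rewrite -[map _ _]cat0s mprod_subst_pmap /graft.
case: (pmap id ss) => [|a [|b ts]] /=; [exact: mprod_nil | exact: mprod1 |].
by rewrite -map_comp.
Qed.

Lemma zprod_degx (cs : seq ltree) (F : ltree -> ptree -> K) ss :
  (forall c, List.In c cs -> forall T, F c T != 0 -> (degx_tree c <= degx T)%N) ->
  size ss = size cs -> zprod (map F cs) ss != 0 ->
  (sumn (map degx_tree cs) <= sumn (map degx ss))%N.
Proof.
elim: cs ss => [|c cs IH] [|S ss] //= hF [hs]; rewrite zprod_cons mulf_eq0 negb_or.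
case/andP => h1 h2; apply: leq_add; first by apply: (hF c) => //; left.
by apply: IH => // c' hc'; apply: hF; right.
Qed.

Hypothesis ordx_g : ordx_ge g 1.

Lemma degx_subst S T : subst S T != 0 -> (degx S <= degx T)%N.
Proof.
case: S => [t|] //=.
elim/ltree_ind_in: t T => [[|]|a b ts IHa IHb IHts] T //=; first by move/ordx_g.
case/mprod_neq0 => ss [hs hg] hz.
have hs' : size ss = size [:: a, b & ts] by rewrite hs /= size_map.
rewrite -hg degx_graft -addnA; apply: (zprod_degx _ hs' hz).
by move=> c /= [<-|[<-|/IHts]].
Qed.

Lemma subst_series : series g -> series h -> forall S, series (subst S).
Proof.
move=> sg sh [t|] /=; last exact: ind_series.
elim/ltree_ind_in: t => [[|]|a b ts IHa IHb IHts] //=.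
apply: mprod_series => f /= [<-|[<-|]] //.
by case/List.in_map_iff => t [<- /IHts].
Qed.

End Substitution.

Section SubstHom.
Variables (K : fieldType) (g h : ptree -> K).
Hypothesis ordx_g : ordx_ge g 1.
Implicit Types (f : ptree -> K) (fs : seq (ptree -> K)).

(* The junk value [::] is only returned when f is not a series. *)
Definition cover_of f n : seq ptree :=
  epsilon (inhabits [::]) (fun A => uniq A /\ covers n A f).

Definition subst_hom f : ptree -> K :=
  fun T => \sum_(S <- cover_of f (degx T)) f S * subst g h S T.

Lemma cover_ofP f n : series f -> uniq (cover_of f n) /\ covers n (cover_of f n) f.
Proof.
move=> sf; apply: (epsilon_spec (inhabits [::]) (fun A => uniq A /\ covers n A f)).
by case: (series_covers n sf) => A; exists A.
Qed.

Lemma subst_homE f T A : series f -> uniq A -> covers (degx T) A f ->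
  subst_hom f T = \sum_(S <- A) f S * subst g h S T.
Proof.
move=> sf uA hA; case: (cover_ofP (degx T) sf) => uC hC.
apply: eq_big_supp_uniq => // S; rewrite mulf_eq0 negb_or => /andP [hf hs].
  exact: hC hf (degx_subst ordx_g hs).
exact: hA hf (degx_subst ordx_g hs).
Qed.

Lemma subst_hom_ind S0 : subst_hom (ind K S0) = subst g h S0.
Proof.
apply: functional_extensionality => T.
rewrite (subst_homE (A := [:: S0]) (ind_series K S0)) //; first by rewrite big_seq1 /ind eqxx mul1r.
move=> S; case: (eqVneq S S0) => [->|ne]; first by rewrite inE.
by rewrite /ind (negbTE ne) mulr0n eqxx.
Qed.

Lemma subst_hom_lincomb a f1 f2 : series f1 -> series f2 ->
  subst_hom (lincomb a f1 f2) = lincomb a (subst_hom f1) (subst_hom f2).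
Proof.
move=> s1 s2; apply: functional_extensionality => T.
case: (series_covers (degx T) s1) => A1 _ h1; case: (series_covers (degx T) s2) => A2 _ h2.
set A := undup (A1 ++ A2); have uA : uniq A := undup_uniq _.
have hA1 : covers (degx T) A f1 by move=> S hS hd; rewrite mem_undup mem_cat h1.
have hA2 : covers (degx T) A f2 by move=> S hS hd; rewrite mem_undup mem_cat h2 ?orbT.
have hA : covers (degx T) A (lincomb a f1 f2).
  by move=> S /lincomb_neq0 /orP [hS|hS] hd; [exact: hA1 | exact: hA2].
rewrite (subst_homE (lincomb_series a s1 s2) uA hA) /lincomb.
rewrite (subst_homE s1 uA hA1) (subst_homE s2 uA hA2) mulr_sumr -big_split /=.
by apply: eq_bigr => S _; rewrite mulrDl mulrA.
Qed.

Lemma subst_hom_continuous : xadic_continuous subst_hom.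
Proof.
move=> f sf n; exists n => f' sf' hf' T; apply: contraR; rewrite -ltnNge => hT.
case: (series_covers (degx T) sf) => A _ hA; case: (series_covers (degx T) sf') => A' _ hA'.
set B := undup (A' ++ A); have uB : uniq B := undup_uniq _.
rewrite /sub_s (subst_homE sf' uB); last by move=> S hS hd; rewrite mem_undup mem_cat hA'.
rewrite (subst_homE sf uB); last by move=> S hS hd; rewrite mem_undup mem_cat hA ?orbT.
rewrite -sumrB big1 // => S _; rewrite -mulrBl.
case: (eqVneq (subst g h S T) 0) => [->|hs]; first by rewrite mulr0.
suff -> : f' S - f S = 0 by rewrite mul0r.
apply/eqP; apply: contraTT hT => hS; rewrite -leqNgt.
exact: leq_trans (hf' S hS) (degx_subst ordx_g hs).
Qed.

Lemma zprod_subst_hom fs tt A n : (forall f, List.In f fs -> series f) -> uniq A ->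
  (forall f, List.In f fs -> covers n A f) ->
  size tt = size fs -> all (fun T => degx T <= n)%N tt ->
  zprod (map subst_hom fs) tt =
  \sum_(ss <- tuples_in A (size fs)) zprod fs ss * zprod (map (subst g h) ss) tt.
Proof.
move=> sfs uA hA; elim: fs tt sfs hA => [|f fs IH] [|T tt] //= sfs hA.
  by move=> _ _; rewrite big_seq1 /zprod !big_nil mulr1.
case=> hs /andP [hT htt].
have sf : series f by apply: sfs; left.
have hAf : covers (degx T) A f.
  by move=> S hS hd; apply: (hA f (or_introl erefl)) hS (leq_trans hd hT).
have IHtt := IH tt (fun f' hf' => sfs f' (or_intror hf')) (fun f' hf' => hA f' (or_intror hf')).
rewrite zprod_cons (subst_homE sf uA hAf) IHtt //.
rewrite big_allpairs_dep mulr_suml; apply: eq_bigr => S _.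
rewrite mulr_sumr; apply: eq_bigr => ss _.
by rewrite !zprod_cons mulrACA.
Qed.

Lemma mprod_subst_hom_expand fs T A : (forall f, List.In f fs -> series f) -> uniq A ->
  (forall f, List.In f fs -> covers (degx T) A f) ->
  mprod (map subst_hom fs) T =
  \sum_(ss <- tuples_in A (size fs)) zprod fs ss * subst g h (graft ss) T.
Proof.
move=> sfs uA hA; rewrite /mprod size_map.
transitivity (\sum_(tt <- decomps (size fs) T)
    \sum_(ss <- tuples_in A (size fs)) zprod fs ss * zprod (map (subst g h) ss) tt).
  apply: eq_big_seq => tt; rewrite mem_decomps => /andP [/eqP htt /eqP hg].
  apply: (zprod_subst_hom sfs uA hA htt).
  by apply/allP => S hS; rewrite -hg; exact: leq_degx_graft.
rewrite exchange_big /=; apply: eq_big_seq => ss; rewrite mem_tuples_in => /andP [/eqP hs _].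
by rewrite -mulr_sumr -mprod_subst /mprod size_map hs.
Qed.

Lemma subst_hom_mprod_expand fs T A : (forall f, List.In f fs -> series f) -> uniq A ->
  (forall f, List.In f fs -> covers (degx T) A f) ->
  subst_hom (mprod fs) T =
  \sum_(ss <- tuples_in A (size fs)) zprod fs ss * subst g h (graft ss) T.
Proof.
move=> sfs uA hA; set U := tuples_in A (size fs); set B := undup (map graft U).
have inU ss : size ss = size fs -> zprod fs ss != 0 -> (degx (graft ss) <= degx T)%N -> ss \in U.
  by move=> hs hz; apply: zprod_neq0_tuples_in.
rewrite (@subst_homE (mprod fs) T B (mprod_series sfs) (undup_uniq _)); last first.
  move=> S /mprod_neq0 [ss [hs hg] hz] hd; rewrite mem_undup; apply/mapP.
  by exists ss => //; apply: inU; rewrite ?hg.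
transitivity (\sum_(S <- B) \sum_(ss <- U)
    (if graft ss == S then zprod fs ss * subst g h S T else 0)).
  apply: eq_bigr => S _; case: (eqVneq (subst g h S T) 0) => [->|hS].
    by rewrite mulr0 big1 // => ss _; rewrite mulr0 if_same.
  rewrite (mprodE (U := U)) ?tuples_in_uniq // => [|ss hs hg hz]; last first.
    by apply: inU; rewrite ?hg ?(degx_subst ordx_g hS).
  rewrite mulr_suml; apply: eq_big_seq => ss; rewrite mem_tuples_in => /andP [/eqP -> _].
  by rewrite eqxx /=; case: eqP; rewrite ?mul0r.
rewrite exchange_big /=; apply: eq_big_seq => ss hss.
rewrite (eq_big_supp_uniq (s := [:: graft ss])) ?big_seq1 ?eqxx ?undup_uniq // => S;
  case: (eqVneq (graft ss) S) => [<- _|_]; rewrite ?eqxx ?inE //.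
by rewrite mem_undup map_f.
Qed.

Lemma subst_hom_mprod fs : (forall f, List.In f fs -> series f) ->
  subst_hom (mprod fs) = mprod (map subst_hom fs).
Proof.
move=> sfs; apply: functional_extensionality => T.
case: (series_covers_all (degx T) sfs) => A uA hA.
by rewrite (subst_hom_mprod_expand sfs uA hA) (mprod_subst_hom_expand sfs uA hA).
Qed.

Hypotheses (series_g : series g) (series_h : series h).

Lemma subst_hom_series f : series f -> series (subst_hom f).
Proof.
move=> sf n.
have [B hB] : exists B : seq ptree, forall S, S \in cover_of f n ->
    forall T, subst g h S T != 0 -> degx T = n -> T \in B.
  elim: (cover_of f n) => [|S0 s [B hB]]; first by exists [::].
  case: (subst_series series_g series_h S0 n) => B0 h0; exists (B0 ++ B) => S.
  rewrite inE => /orP [/eqP -> T hT hd|hS T hT hd]; rewrite mem_cat; first by rewrite h0.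
  by rewrite (hB _ hS _ hT hd) orbT.
exists B => T; rewrite /subst_hom => + hd; rewrite hd => /sumr_neq0_exists [S hS].
by rewrite mulf_eq0 negb_or => /andP [_ hT]; exact: hB hS T hT hd.
Qed.

End SubstHom.

Definition restrict (K : fieldType) (A : seq ptree) (f : ptree -> K) : ptree -> K :=
  fun S => if S \in A then f S else 0.

Lemma restrict_series (K : fieldType) A (f : ptree -> K) : series (restrict A f).
Proof. by move=> n; exists A => S; rewrite /restrict; case: ifP; rewrite ?eqxx. Qed.

Section Uniqueness.
Variables (K : fieldType) (g h : ptree -> K) (psi : (ptree -> K) -> ptree -> K).
Hypothesis hom_psi : is_hom_gh psi g h.

Lemma hom_zero : psi (fun=> 0) = fun=> 0.
Proof.
have [_ [psi_lin _]] := hom_psi.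
have s0 : series (fun=> 0 : K) by move=> n; exists [::] => S; rewrite eqxx.
have := psi_lin (-1) _ _ s0 s0.
have -> : lincomb (-1) (fun=> 0) (fun=> 0) = fun=> 0 :> K.
  by apply: functional_extensionality => S; rewrite /lincomb mulr0 addr0.
move=> E; apply: functional_extensionality => S.
by rewrite [LHS](congr1 (@^~ S) E) /lincomb mulN1r addNr.
Qed.

Lemma hom_ind S : psi (ind K S) = subst g h S.
Proof.
have [_ [_ [psi1 [psiM [psiX [psiY _]]]]]] := hom_psi.
case: S => [t|]; last exact: psi1.
elim/ltree_ind_in: t => [[|]|a b ts IHa IHb IHts]; [exact: psiX | exact: psiY |].
set s := map Some [:: a, b & ts].
have -> : ind K (Some (LNode a b ts)) = mprod (map (ind K) s).
  by apply: functional_extensionality => T; rewrite mprod_ind graft_node.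
rewrite (psiM (map (ind K) s)) //; last exact: ind_series_all.
have -> : map psi (map (ind K) s) = map (subst g h) s.
  rewrite /s /= IHa IHb; congr [:: _, _ & _].
  elim: ts IHts {s} => //= t ts IH IHts; rewrite IHts; last by left.
  by rewrite IH // => t' ht'; apply: IHts; right.
by apply: functional_extensionality => T; rewrite mprod_subst graft_node.
Qed.

Lemma hom_restrict f A : uniq A ->
  psi (restrict A f) = fun T => \sum_(S <- A) f S * subst g h S T.
Proof.
have [_ [psi_lin _]] := hom_psi.
elim: A => [_|S A IH /= /andP [hS uA]].
  have -> : restrict [::] f = fun=> 0 by [].
  by rewrite hom_zero; apply: functional_extensionality => T; rewrite big_nil.
have -> : restrict (S :: A) f = lincomb (f S) (ind K S) (restrict A f).
  apply: functional_extensionality => S'; rewrite /restrict /lincomb /ind inE.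
  case: (eqVneq S' S) => [->|_] /=; first by rewrite (negbTE hS) mulr1 addr0.
  by rewrite mulr0 add0r.
rewrite psi_lin ?hom_ind ?IH //; [|exact: ind_series|exact: restrict_series].
by apply: functional_extensionality => T; rewrite /lincomb big_cons.
Qed.

Hypothesis ordx_g : ordx_ge g 1.

Lemma hom_unique f : series f -> psi f = subst_hom g h f.
Proof.
have [_ [_ [_ [_ [_ [_ psi_cont]]]]]] := hom_psi.
move=> sf; apply: functional_extensionality => T.
case: (psi_cont f sf (degx T).+1) => m hm.
case: (series_covers (maxn m (degx T)) sf) => A uA hA.
have hfA : ordx_ge (sub_s (restrict A f) f) m.
  move=> S; rewrite /sub_s /restrict; case: ifP => hS; first by rewrite subrr eqxx.
  rewrite sub0r oppr_eq0 => hf; rewrite leqNgt; apply: contraFN hS => hd.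
  exact: hA hf (leq_trans (ltnW hd) (leq_maxl _ _)).
have E : psi (restrict A f) T = psi f T.
  apply/eqP; rewrite -subr_eq0; apply: contraFT (ltnn (degx T)) => hne.
  exact: hm _ (restrict_series A f) hfA T hne.
rewrite -E hom_restrict // (subst_homE h ordx_g sf uA) // => S hS hd.
exact: hA hS (leq_trans hd (leq_maxr _ _)).
Qed.

End Uniqueness.

Theorem proposition3p1 (K : fieldType) (g h : ptree -> K) :
  series g -> series h -> ordx_ge g 1 ->
  exists phi : (ptree -> K) -> (ptree -> K),
    is_hom_gh phi g h /\
    (forall psi : (ptree -> K) -> (ptree -> K), is_hom_gh psi g h ->
       forall f, series f -> psi f = phi f).
Proof.
move=> sg sh og; exists (subst_hom g h); split; last first.
  by move=> psi hpsi f sf; exact: hom_unique.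
split; first exact: subst_hom_series.
split; first exact: subst_hom_lincomb.
split; first exact: (subst_hom_ind h og None).
split; first by move=> fs _; exact: subst_hom_mprod.
split; first exact: (subst_hom_ind h og (Some (LLeaf X))).
split; first exact: (subst_hom_ind h og (Some (LLeaf Y))).
exact: subst_hom_continuous.
Qed.
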